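(* Let $M^5\subset\mathbb{C}^3$ be a hypersurface of class $\mathcal{C}^\kappa$ ($\kappa\ge3$), $\mathcal{C}^\infty$ or $\mathcal{C}^\omega$, given in holomorphic coordinates $(z_1,z_2,w)$, $z_k=x_k+\sqrt{-1}y_k$, $w=u+\sqrt{-1}v$, by $v=\varphi(x_1,x_2,y_1,y_2,u)$ with $\varphi$ real-valued. Set $$A_i:=-\frac{\varphi_{z_i}}{\sqrt{-1}+\varphi_u},\qquad \mathcal{L}_i:=\frac{\partial}{\partial z_i}+A_i\frac{\partial}{\partial u},\qquad \overline{\mathcal{L}}_i:=\frac{\partial}{\partial\bar z_i}+\overline{A_i}\frac{\partial}{\partial u}\qquad(i=1,2),$$ and assume that $\mathcal{L}_1(\overline{A_1})$, $\overline{\mathcal{L}}_1(A_1)$ and $\mathcal{L}_1(\overline{A_1})-\overline{\mathcal{L}}_1(A_1)$ are nowhere zero on the domain considered. Then $$-\frac{\mathcal{L}_2(\overline{A_1})-\overline{\mathcal{L}}_1(A_2)}{\mathcal{L}_1(\overline{A_1})-\overline{\mathcal{L}}_1(A_1)}=-\frac{\mathcal{L}_2(\overline{A_1})}{\mathcal{L}_1(\overline{A_1})}=-\frac{\overline{\mathcal{L}}_1(A_2)}{\overline{\mathcal{L}}_1(A_1)}.$$ (When the Levi form of $M$ has rank $1$ everywhere, this common value $k$ is the function for which $\mathcal{K}=k\mathcal{L}_1+\mathcal{L}_2$ generates the Levi kernel.)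
   Context: Notation: $\varphi_{z_i}=\tfrac12(\partial_{x_i}-\sqrt{-1}\partial_{y_i})\varphi$, $\varphi_{\bar z_i}=\overline{\varphi_{z_i}}$, $\varphi_u=\partial\varphi/\partial u$. The fields $\mathcal{L}_1,\mathcal{L}_2$ are written intrinsically on $M$ in the coordinates $(x_1,x_2,y_1,y_2,u)$ and form a frame of $T^{1,0}M$. *)

From Stdlib Require Import Reals ClassicalEpsilon.
Open Scope R_scope.

Record pt := mkpt { px1 : R; px2 : R; py1 : R; py2 : R; pu : R }.

Inductive Var := X1 | X2 | Y1 | Y2 | U.

Definition getc (p : pt) (k : Var) : R :=
  match k with X1 => px1 p | X2 => px2 p | Y1 => py1 p | Y2 => py2 p | U => pu p end.

Definition setc (p : pt) (k : Var) (t : R) : pt :=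
  match k with
  | X1 => mkpt t (px2 p) (py1 p) (py2 p) (pu p)
  | X2 => mkpt (px1 p) t (py1 p) (py2 p) (pu p)
  | Y1 => mkpt (px1 p) (px2 p) t (py2 p) (pu p)
  | Y2 => mkpt (px1 p) (px2 p) (py1 p) t (pu p)
  | U  => mkpt (px1 p) (px2 p) (py1 p) (py2 p) t
  end.

Definition close (q p : pt) (d : R) : Prop :=
  forall k, Rabs (getc q k - getc p k) < d.

Definition open5 (D : pt -> Prop) : Prop :=
  forall p, D p -> exists eps, 0 < eps /\ forall q, close q p eps -> D q.

Definition cont_on (D : pt -> Prop) (f : pt -> R) : Prop :=
  forall p, D p -> forall eps, 0 < eps -> exists delta, 0 < delta /\
    forall q, D q -> close q p delta -> Rabs (f q - f p) < eps.

(** Partial derivative along coordinate k (the value of the limit when it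
    exists; an arbitrary real otherwise). *)
Definition has_pd (k : Var) (f : pt -> R) (p : pt) (l : R) : Prop :=
  derivable_pt_lim (fun t => f (setc p k t)) (getc p k) l.

Definition pd (k : Var) (f : pt -> R) (p : pt) : R :=
  epsilon (inhabits 0) (fun l => has_pd k f p l).

Fixpoint Ck (n : nat) (D : pt -> Prop) (f : pt -> R) : Prop :=
  cont_on D f /\
  match n with
  | O => True
  | S m => forall k, (forall p, D p -> exists l, has_pd k f p l) /\ Ck m D (pd k f)
  end.

(** Complex numbers as pairs (real part, imaginary part). *)
Definition C := (R * R)%type.
Definition C0 : C := (0, 0).
Definition Ci : C := (0, 1).
Definition RtoC (a : R) : C := (a, 0).
Definition Cadd (z w : C) : C := (fst z + fst w, snd z + snd w).
Definition Copp (z : C) : C := (- fst z, - snd z).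
Definition Csub (z w : C) : C := Cadd z (Copp w).
Definition Cmul (z w : C) : C :=
  (fst z * fst w - snd z * snd w, fst z * snd w + snd z * fst w).
Definition Cinv (z : C) : C :=
  let n := fst z * fst z + snd z * snd z in (fst z / n, - snd z / n).
Definition Cdiv (z w : C) : C := Cmul z (Cinv w).
Definition Cconj (z : C) : C := (fst z, - snd z).

Definition CFun := pt -> C.

Inductive Idx := I1 | I2.
Definition xv (i : Idx) : Var := match i with I1 => X1 | I2 => X2 end.
Definition yv (i : Idx) : Var := match i with I1 => Y1 | I2 => Y2 end.

Definition Cpd (k : Var) (g : CFun) : CFun :=
  fun p => (pd k (fun q => fst (g q)) p, pd k (fun q => snd (g q)) p).

Definition Dz (i : Idx) (g : CFun) : CFun :=
  fun p => Cmul (RtoC (/2)) (Csub (Cpd (xv i) g p) (Cmul Ci (Cpd (yv i) g p))).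
Definition Dzb (i : Idx) (g : CFun) : CFun :=
  fun p => Cmul (RtoC (/2)) (Cadd (Cpd (xv i) g p) (Cmul Ci (Cpd (yv i) g p))).
Definition Du (g : CFun) : CFun := Cpd U g.

Definition toCF (f : pt -> R) : CFun := fun p => RtoC (f p).

Definition Acoef (phi : pt -> R) (i : Idx) : CFun :=
  fun p => Cdiv (Copp (Dz i (toCF phi) p)) (Cadd Ci (RtoC (pd U phi p))).
Definition Abar (phi : pt -> R) (i : Idx) : CFun :=
  fun p => Cconj (Acoef phi i p).

Definition Lf (phi : pt -> R) (i : Idx) (g : CFun) : CFun :=
  fun p => Cadd (Dz i g p) (Cmul (Acoef phi i p) (Du g p)).
Definition Lbf (phi : pt -> R) (i : Idx) (g : CFun) : CFun :=
  fun p => Cadd (Dzb i g p) (Cmul (Abar phi i p) (Du g p)).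

(** Write P = phi_u.  Since A_i = - phi_{z_i} / (i + P), the derivatives of
    A_i and of conj(A_j) are explicit rational expressions in the first and
    second derivatives of phi.  Expanding them, and using the symmetry of the
    second derivatives of phi (Schwarz's theorem, phi being C^2), one finds
    the conjugation identity
        L_i(conj A_j) (P - i) = Lbar_j(A_i) (P + i)   (= - N_ij / (P^2 + 1)),
    with an explicit "Levi numerator" N_ij.  Thus, with rho = (P + i)/(P - i),
    L_2(conj A_1) = rho Lbar_1(A_2) and L_1(conj A_1) = rho Lbar_1(A_1), and
    the three quotients of the theorem agree by elementary complex algebra. *)

From Coquelicot Require Import Hierarchy Continuity Derive Derive_2d.
From Stdlib Require Import Reals Lra ClassicalEpsilon FunctionalExtensionality.
Open Scope R_scope.

Lemma setc_getc p k : setc p k (getc p k) = p.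
Proof. destruct p, k; reflexivity. Qed.

Lemma getc_setc2_first p k l u v : k <> l -> getc (setc (setc p k u) l v) k = u.
Proof. destruct p, k, l; simpl; intros; try reflexivity; congruence. Qed.

Lemma getc_setc2_second p k l u v : getc (setc (setc p k u) l v) l = v.
Proof. destruct p, k, l; reflexivity. Qed.

Lemma setc2_first p k l u v z : k <> l ->
  setc (setc (setc p k u) l v) k z = setc (setc p k z) l v.
Proof. destruct p, k, l; simpl; intros; try reflexivity; congruence. Qed.

Lemma setc2_second p k l u v z :
  setc (setc (setc p k u) l v) l z = setc (setc p k u) l z.
Proof. destruct p, k, l; reflexivity. Qed.

Lemma setc_comm p k l u v : k <> l -> setc (setc p k u) l v = setc (setc p l v) k u.
Proof. destruct p, k, l; simpl; intros; try reflexivity; congruence. Qed.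

Lemma close_setc2 p k l u v e : k <> l -> 0 < e ->
  Rabs (u - getc p k) < e -> Rabs (v - getc p l) < e -> close (setc (setc p k u) l v) p e.
Proof.
  intros Hkl He Hu Hv m. destruct p, k, l, m; simpl in *; try congruence; try assumption;
  unfold Rminus; rewrite Rplus_opp_r, Rabs_R0; assumption.
Qed.

Lemma Var_eq_dec (k l : Var) : {k = l} + {k <> l}.
Proof. decide equality. Qed.

Lemma pd_unique k f p l : has_pd k f p l -> pd k f p = l.
Proof.
  intro H. unfold pd.
  pose proof (epsilon_spec (inhabits 0) (fun l => has_pd k f p l) (ex_intro _ l H)) as H'.
  exact (uniqueness_limite _ _ _ _ H' H).
Qed.

Lemma pd_spec k f p : (exists l, has_pd k f p l) -> has_pd k f p (pd k f p).
Proof. intros [l H]. rewrite (pd_unique _ _ _ _ H). exact H. Qed.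

Lemma has_pd_eq k f p l l' : has_pd k f p l -> l = l' -> has_pd k f p l'.
Proof. now intros H <-. Qed.

Lemma has_pd_const k c p : has_pd k (fun _ => c) p 0.
Proof. exact (derivable_pt_lim_const c (getc p k)). Qed.

Lemma has_pd_plus k f g p a b : has_pd k f p a -> has_pd k g p b ->
  has_pd k (fun q => f q + g q) p (a + b).
Proof. exact (derivable_pt_lim_plus _ _ _ _ _). Qed.

Lemma has_pd_minus k f g p a b : has_pd k f p a -> has_pd k g p b ->
  has_pd k (fun q => f q - g q) p (a - b).
Proof. exact (derivable_pt_lim_minus _ _ _ _ _). Qed.

Lemma has_pd_opp k f p a : has_pd k f p a -> has_pd k (fun q => - f q) p (- a).
Proof. exact (derivable_pt_lim_opp _ _ _). Qed.

Lemma has_pd_mult k f g p a b : has_pd k f p a -> has_pd k g p b ->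
  has_pd k (fun q => f q * g q) p (a * g p + f p * b).
Proof.
  intros Hf Hg. pose proof (derivable_pt_lim_mult _ _ _ _ _ Hf Hg) as H.
  cbv beta in H. now rewrite setc_getc in H.
Qed.

Lemma has_pd_div k f g p a b : has_pd k f p a -> has_pd k g p b -> g p <> 0 ->
  has_pd k (fun q => f q / g q) p ((a * g p - b * f p) / (g p)²).
Proof.
  intros Hf Hg Hnz. rewrite <- (setc_getc p k) in Hnz.
  pose proof (derivable_pt_lim_div _ _ _ _ _ Hf Hg Hnz) as H.
  cbv beta in H. now rewrite setc_getc in H.
Qed.

Lemma has_pd_slice_second g p k l u v L : has_pd l g (setc (setc p k u) l v) L ->
  derivable_pt_lim (fun t => g (setc (setc p k u) l t)) v L.
Proof.
  unfold has_pd. rewrite getc_setc2_second. intro H.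
  replace (fun t => g (setc (setc p k u) l t))
    with (fun t => g (setc (setc (setc p k u) l v) l t)); [exact H|].
  apply functional_extensionality; intro t. now rewrite setc2_second.
Qed.

Lemma has_pd_slice_first g p k l u v L : k <> l -> has_pd k g (setc (setc p k u) l v) L ->
  derivable_pt_lim (fun s => g (setc (setc p k s) l v)) u L.
Proof.
  intro Hkl. unfold has_pd. rewrite getc_setc2_first by exact Hkl. intro H.
  replace (fun s => g (setc (setc p k s) l v))
    with (fun s => g (setc (setc (setc p k u) l v) k s)); [exact H|].
  apply functional_extensionality; intro s. now rewrite setc2_first.
Qed.

(** Symmetry of second partial derivatives

    Near an interior point p of a set D on which f has first and second
    partials, the latter continuous, the two-variable slice
    (s, t) |-> f(p[k:=s][l:=t]) satisfies the hypotheses of Schwarz's theorem,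
    and its mixed derivatives are the mixed partials of f. *)

Section MixedPartials.
Variables (D : pt -> Prop) (f : pt -> R) (p : pt) (eps : R).
Hypothesis eps_pos : 0 < eps.
Hypothesis ball_in_D : forall q, close q p eps -> D q.
Hypothesis first_pd_exist : forall m q, D q -> exists L, has_pd m f q L.
Hypothesis second_pd_exist : forall m n q, D q -> exists L, has_pd n (pd m f) q L.

Let slice k l (s t : R) : R := f (setc (setc p k s) l t).

Lemma slice_swap k l s t : k <> l -> slice k l s t = slice l k t s.
Proof. intro Hkl. unfold slice. now rewrite setc_comm. Qed.

Lemma center_in_range x : Rabs (x - x) < eps.
Proof. unfold Rminus. now rewrite Rplus_opp_r, Rabs_R0. Qed.

Lemma Derive_slice_second k l u v : k <> l ->
  Rabs (u - getc p k) < eps -> Rabs (v - getc p l) < eps ->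
  Derive (fun t => slice k l u t) v = pd l f (setc (setc p k u) l v).
Proof.
  intros Hkl Hu Hv.
  destruct (first_pd_exist l (setc (setc p k u) l v)) as [L HL].
  { apply ball_in_D, close_setc2; auto. }
  rewrite (pd_unique _ _ _ _ HL). apply is_derive_unique, is_derive_Reals.
  exact (has_pd_slice_second _ _ _ _ _ _ _ HL).
Qed.

Lemma is_derive_slice_mixed k l u v : k <> l ->
  Rabs (u - getc p k) < eps -> Rabs (v - getc p l) < eps ->
  is_derive (fun z => Derive (fun t => slice k l z t) v) u
    (pd k (pd l f) (setc (setc p k u) l v)).
Proof.
  intros Hkl Hu Hv.
  assert (Hr : 0 < eps - Rabs (u - getc p k)) by lra.
  apply (is_derive_ext_loc (fun z => pd l f (setc (setc p k z) l v))).
  - exists (mkposreal _ Hr). intros z Hz.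
    change (Rabs (z - u) < eps - Rabs (u - getc p k)) in Hz.
    symmetry. apply Derive_slice_second; auto.
    replace (z - getc p k) with ((z - u) + (u - getc p k)) by ring.
    pose proof (Rabs_triang (z - u) (u - getc p k)). lra.
  - apply is_derive_Reals.
    destruct (second_pd_exist l k (setc (setc p k u) l v)) as [L HL].
    { apply ball_in_D, close_setc2; auto. }
    rewrite (pd_unique _ _ _ _ HL).
    exact (has_pd_slice_first _ _ _ _ _ _ _ Hkl HL).
Qed.

Lemma Derive_slice_mixed k l u v : k <> l ->
  Rabs (u - getc p k) < eps -> Rabs (v - getc p l) < eps ->
  Derive (fun z => Derive (fun t => slice k l z t) v) u
    = pd k (pd l f) (setc (setc p k u) l v).
Proof. intros. now apply is_derive_unique, is_derive_slice_mixed. Qed.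

Lemma slice_Schwarz_hypotheses k l : k <> l ->
  locally_2d (fun u v =>
    ex_derive (fun z => slice k l z v) u /\ ex_derive (fun z => slice k l u z) v /\
    ex_derive (fun z => Derive (fun t => slice k l z t) v) u /\
    ex_derive (fun z => Derive (fun t => slice k l t z) u) v) (getc p k) (getc p l).
Proof.
  intro Hkl. exists (mkposreal eps eps_pos). intros u v Hu Hv. simpl in Hu, Hv.
  assert (Hq : D (setc (setc p k u) l v)) by (apply ball_in_D, close_setc2; auto).
  split; [|split; [|split]].
  - destruct (first_pd_exist k _ Hq) as [L HL]. exists L.
    apply is_derive_Reals. exact (has_pd_slice_first _ _ _ _ _ _ _ Hkl HL).
  - destruct (first_pd_exist l _ Hq) as [L HL]. exists L.
    apply is_derive_Reals. exact (has_pd_slice_second _ _ _ _ _ _ _ HL).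
  - eexists. apply is_derive_slice_mixed; auto.
  - eexists. apply (is_derive_ext (fun z => Derive (fun t => slice l k z t) u)).
    + intro z. f_equal. apply functional_extensionality; intro t. now apply slice_swap.
    + apply is_derive_slice_mixed; auto.
Qed.

Hypothesis second_pd_cont : forall m n, cont_on D (pd n (pd m f)).
Hypothesis Dp : D p.

Lemma slice_mixed_continuous k l : k <> l ->
  continuity_2d_pt (fun u v => Derive (fun z => Derive (fun t => slice k l z t) v) u)
    (getc p k) (getc p l).
Proof.
  intros Hkl e. destruct (second_pd_cont l k p Dp e (cond_pos e)) as [d [Hd Hc]].
  assert (Hm : 0 < Rmin d eps) by (apply Rmin_pos; auto).
  exists (mkposreal _ Hm). intros u v Hu Hv. simpl in Hu, Hv.
  pose proof (Rmin_l d eps). pose proof (Rmin_r d eps).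
  rewrite !Derive_slice_mixed, !setc_getc by (auto using center_in_range; lra).
  apply Hc; [apply ball_in_D|]; apply close_setc2; auto; lra.
Qed.

Lemma pd_swap k l : pd k (pd l f) p = pd l (pd k f) p.
Proof.
  destruct (Var_eq_dec k l) as [<-|Hkl]; [reflexivity|].
  assert (Hlk : l <> k) by congruence.
  (* the mixed derivative taken in the other order is that of the swapped slice *)
  assert (Hsym : forall u, (fun z => Derive (fun t => slice k l t z) u)
                           = (fun z => Derive (fun t => slice l k z t) u)).
  { intro u. apply functional_extensionality; intro z. f_equal.
    apply functional_extensionality; intro t. now apply slice_swap. }
  assert (Hcont : continuity_2d_pt
    (fun u v => Derive (fun z => Derive (fun t => slice k l t z) u) v) (getc p k) (getc p l)).
  { intro e. destruct (slice_mixed_continuous l k Hlk e) as [d Hd].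
    exists d. intros u v Hu Hv. rewrite !Hsym. now apply Hd. }
  pose proof (Schwarz (slice k l) (getc p k) (getc p l)
    (slice_Schwarz_hypotheses k l Hkl) (slice_mixed_continuous k l Hkl) Hcont) as Hs.
  rewrite Hsym, !Derive_slice_mixed, !setc_getc in Hs by auto using center_in_range.
  exact Hs.
Qed.

End MixedPartials.

Lemma Ck_le n m D f : (m <= n)%nat -> Ck n D f -> Ck m D f.
Proof.
  assert (Ck_pred : forall j g, Ck (S j) D g -> Ck j D g).
  { intro j; induction j as [|j IH]; intros g [Hc Hd]; split; auto.
    intro k. destruct (Hd k) as [Hex Hk]. split; auto. }
  intro Hle. induction Hle; auto.
Qed.

Lemma C2_has_second_pd D f p m n : Ck 2 D f -> D p ->
  has_pd n (pd m f) p (pd n (pd m f) p).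
Proof.
  intros [_ H2] Dp. apply pd_spec.
  destruct (H2 m) as [_ [_ H1]]. exact (proj1 (H1 n) p Dp).
Qed.

Lemma C2_pd_swap D f p m n : open5 D -> Ck 2 D f -> D p ->
  pd n (pd m f) p = pd m (pd n f) p.
Proof.
  intros HO [_ H2] Dp. destruct (HO p Dp) as [eps [Heps Hball]].
  apply (pd_swap D f p eps); auto.
  - intros k q Dq. exact (proj1 (H2 k) q Dq).
  - intros k l q Dq. destruct (H2 k) as [_ [_ H1]]. exact (proj1 (H1 l) q Dq).
  - intros k l. destruct (H2 k) as [_ [_ H1]]. exact (proj1 (proj2 (H1 l))).
Qed.

Definition has_Cpd k (g : CFun) p (l : C) : Prop :=
  has_pd k (fun q => fst (g q)) p (fst l) /\ has_pd k (fun q => snd (g q)) p (snd l).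

Lemma Cpd_unique k g p l : has_Cpd k g p l -> Cpd k g p = l.
Proof.
  intros [H1 H2]. unfold Cpd.
  rewrite (pd_unique _ _ _ _ H1), (pd_unique _ _ _ _ H2). now destruct l.
Qed.

Lemma has_Cpd_eq k g p l l' : has_Cpd k g p l -> l = l' -> has_Cpd k g p l'.
Proof. now intros H <-. Qed.

Lemma has_Cpd_ext k f g p l : (forall q, f q = g q) -> has_Cpd k f p l -> has_Cpd k g p l.
Proof. intros E. now replace g with f by (apply functional_extensionality; auto). Qed.

Lemma has_Cpd_const k (c : C) p : has_Cpd k (fun _ => c) p C0.
Proof. split; apply has_pd_const. Qed.

Lemma has_Cpd_RtoC k f p a : has_pd k f p a -> has_Cpd k (fun q => RtoC (f q)) p (RtoC a).
Proof. intro H; split; [exact H | exact (has_pd_const k 0 p)]. Qed.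

Lemma has_Cpd_add k f g p a b : has_Cpd k f p a -> has_Cpd k g p b ->
  has_Cpd k (fun q => Cadd (f q) (g q)) p (Cadd a b).
Proof. intros [H1 H2] [H3 H4]; split; now apply has_pd_plus. Qed.

Lemma has_Cpd_opp k f p a : has_Cpd k f p a -> has_Cpd k (fun q => Copp (f q)) p (Copp a).
Proof. intros [H1 H2]; split; now apply has_pd_opp. Qed.

Lemma has_Cpd_sub k f g p a b : has_Cpd k f p a -> has_Cpd k g p b ->
  has_Cpd k (fun q => Csub (f q) (g q)) p (Csub a b).
Proof. intros H1 H2. apply has_Cpd_add; auto. now apply has_Cpd_opp. Qed.

Lemma has_Cpd_conj k f p a : has_Cpd k f p a -> has_Cpd k (fun q => Cconj (f q)) p (Cconj a).
Proof. intros [H1 H2]; split; [exact H1 | now apply has_pd_opp]. Qed.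

Lemma has_Cpd_mul k f g p a b : has_Cpd k f p a -> has_Cpd k g p b ->
  has_Cpd k (fun q => Cmul (f q) (g q)) p (Cadd (Cmul a (g p)) (Cmul (f p) b)).
Proof.
  intros [H1 H2] [H3 H4]; split; simpl.
  - eapply has_pd_eq; [apply has_pd_minus; apply has_pd_mult; eassumption | cbv beta; ring].
  - eapply has_pd_eq; [apply has_pd_plus; apply has_pd_mult; eassumption | cbv beta; ring].
Qed.

Lemma Cnorm2_neq0 (z : C) : z <> C0 -> fst z * fst z + snd z * snd z <> 0.
Proof.
  destruct z as [x y]; simpl; intros H E; apply H.
  assert (x = 0) by nra; assert (y = 0) by nra; subst; reflexivity.
Qed.

Lemma has_Cpd_inv k f p a : has_Cpd k f p a -> f p <> C0 ->
  has_Cpd k (fun q => Cinv (f q)) p (Copp (Cmul a (Cinv (Cmul (f p) (f p))))).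
Proof.
  intros [H1 H2] Hf. pose proof (Cnorm2_neq0 _ Hf) as N.
  assert (Hnorm2 : has_pd k (fun q => fst (f q) * fst (f q) + snd (f q) * snd (f q)) p
      (fst a * fst (f p) + fst (f p) * fst a + (snd a * snd (f p) + snd (f p) * snd a))).
  { apply has_pd_plus; now apply has_pd_mult. }
  (* |z^2|^2 = (|z|^2)^2 does not vanish either *)
  assert (Nsq : forall x y : R, x * x + y * y <> 0 ->
    (x*x - y*y) * (x*x - y*y) + (x*y + y*x) * (x*y + y*x) <> 0).
  { intros x y Hxy.
    replace ((x*x - y*y) * (x*x - y*y) + (x*y + y*x) * (x*y + y*x))
      with ((x*x + y*y) * (x*x + y*y)) by ring.
    now apply Rmult_integral_contrapositive. }
  split; simpl.
  - eapply has_pd_eq; [apply has_pd_div; [exact H1 | exact Hnorm2 | exact N]|].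
    revert N. cbv beta. destruct (f p) as [x y], a as [a1 a2]; simpl. intro N.
    unfold Rsqr. field. auto.
  - eapply has_pd_eq; [apply has_pd_div; [exact (has_pd_opp _ _ _ _ H2) | exact Hnorm2 | exact N]|].
    revert N. cbv beta. destruct (f p) as [x y], a as [a1 a2]; simpl. intro N.
    unfold Rsqr. field. auto.
Qed.

(** With (a, b, c) = (phi_x, phi_y, phi_u) for one pair of real coordinates,
    phi_z = (a - i b)/2 and A = - phi_z / (i + c).  Along any coordinate in
    which (a, b, c) have derivatives (a', b', c'), the quotient rule gives the
    derivative dAexpr of A. *)

Definition half_dz (a b : R) : C := Cmul (RtoC (/2)) (Csub (RtoC a) (Cmul Ci (RtoC b))).
Definition i_plus (c : R) : C := Cadd Ci (RtoC c).
Definition Aexpr (a b c : R) : C := Cdiv (Copp (half_dz a b)) (i_plus c).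
Definition dAexpr (a b c a' b' c' : R) : C :=
  Cdiv (Csub (Cmul (Copp (half_dz a' b')) (i_plus c)) (Cmul (Copp (half_dz a b)) (RtoC c')))
       (Cmul (i_plus c) (i_plus c)).

Lemma i_plus_neq0 c : i_plus c <> C0.
Proof. unfold i_plus, Cadd, Ci, RtoC, C0; simpl. intro E. injection E. lra. Qed.

Lemma Aexpr_components a b c :
  Aexpr a b c = ((b - a*c) / (2*(c*c+1)), (a + b*c) / (2*(c*c+1))).
Proof.
  assert (c*c+1 <> 0) by nra.
  unfold Aexpr, half_dz, i_plus, Cdiv, Cinv, Cmul, Csub, Cadd, Copp, RtoC, Ci; simpl.
  f_equal; field; auto.
Qed.

Lemma dAexpr_components a b c a' b' c' : dAexpr a b c a' b' c' =
  let n1 := (- a'*c - b' + a*c') / 2 in let n2 := (- a' + b'*c - b*c') / 2 in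
  let Q := c*c + 1 in
  ((n1*(c*c-1) + n2*(2*c)) / (Q*Q), (n2*(c*c-1) - n1*(2*c)) / (Q*Q)).
Proof.
  assert (c*c+1 <> 0) by nra.
  assert ((c*c-1)*(c*c-1) + (2*c)*(2*c) <> 0) by nra.
  unfold dAexpr, half_dz, i_plus, Cdiv, Cinv, Cmul, Csub, Cadd, Copp, RtoC, Ci; simpl.
  f_equal; field; split; auto; nra.
Qed.

Lemma has_Cpd_Aexpr n fa fb fc p a' b' c' :
  has_pd n fa p a' -> has_pd n fb p b' -> has_pd n fc p c' ->
  has_Cpd n (fun q => Aexpr (fa q) (fb q) (fc q)) p (dAexpr (fa p) (fb p) (fc p) a' b' c').
Proof.
  intros Ha Hb Hc. unfold Aexpr, Cdiv, half_dz, i_plus.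
  eapply has_Cpd_eq.
  - apply has_Cpd_mul.
    + apply has_Cpd_opp, has_Cpd_mul; [apply has_Cpd_const|].
      apply has_Cpd_sub; [apply has_Cpd_RtoC; eassumption|].
      apply has_Cpd_mul; [apply has_Cpd_const | apply has_Cpd_RtoC; eassumption].
    + apply has_Cpd_inv; [|apply i_plus_neq0].
      apply has_Cpd_add; [apply has_Cpd_const | apply has_Cpd_RtoC; eassumption].
  - assert (fc p * fc p + 1 <> 0) by nra.
    assert ((fc p * fc p - 1) * (fc p * fc p - 1) + (2 * fc p) * (2 * fc p) <> 0) by nra.
    unfold dAexpr, half_dz, i_plus, Cdiv, Cinv, Cmul, Csub, Cadd, Copp, RtoC, Ci, C0; simpl.
    f_equal; field; split; auto; nra.
Qed.

Lemma Cpd_toCF (phi : pt -> R) m q : Cpd m (toCF phi) q = RtoC (pd m phi q).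
Proof. unfold Cpd, RtoC. f_equal. apply pd_unique. exact (has_pd_const m 0 q). Qed.

Lemma Acoef_Aexpr phi j q :
  Acoef phi j q = Aexpr (pd (xv j) phi q) (pd (yv j) phi q) (pd U phi q).
Proof. unfold Acoef, Dz, Aexpr, half_dz, i_plus. now rewrite !Cpd_toCF. Qed.

Lemma has_Cpd_Acoef phi j n p :
  (forall m, has_pd n (pd m phi) p (pd n (pd m phi) p)) ->
  has_Cpd n (Acoef phi j) p
    (dAexpr (pd (xv j) phi p) (pd (yv j) phi p) (pd U phi p)
            (pd n (pd (xv j) phi) p) (pd n (pd (yv j) phi) p) (pd n (pd U phi) p)).
Proof.
  intro Hsecond. eapply has_Cpd_ext.
  - intro q. symmetry. apply Acoef_Aexpr.
  - now apply has_Cpd_Aexpr.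
Qed.

(** Write P = phi_u.  Both sides equal - N_ij / (P^2 + 1), where the "Levi
    numerator"
      N_ij = phi_{z_i zbar_j} (P^2 + 1) - phi_{z_i} phi_{zbar_j u} (P - i)
             - phi_{zbar_j} phi_{z_i u} (P + i) + phi_{z_i} phi_{zbar_j} phi_uu
    is expressed below through the real first and second derivatives of phi
    (xi = phi_{x_i}, xixj = phi_{x_i x_j}, uxi = phi_{u x_i}, ...). *)

Definition levi_num (P Puu xi yi xj yj xixj xiyj yixj yiyj uxi uyi uxj uyj : R) : C :=
  let fzi := (xi/2, - yi/2) in
  let fzbj := (xj/2, yj/2) in
  let fzizbj := ((xixj + yiyj)/4, (xiyj - yixj)/4) in
  let fziu := (uxi/2, - uyi/2) in
  let fzbju := (uxj/2, uyj/2) in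
  Cadd (Cadd (Cmul fzizbj (RtoC (P*P+1))) (Copp (Cmul fzi (Cmul fzbju (P, -1)))))
       (Cadd (Copp (Cmul fzbj (Cmul fziu (P, 1)))) (Cmul fzi (Cmul fzbj (RtoC Puu)))).

(* L_i(conj A_j) = d/dz_i conj(A_j) + A_i d/du conj(A_j), in jet coordinates. *)
Lemma L_Abar_jet (P Puu xi yi xj yj xixj xiyj yixj yiyj uxi uyi uxj uyj : R) :
  Cmul (Cadd (Cmul (RtoC (/2)) (Csub (Cconj (dAexpr xj yj P xixj xiyj uxi))
                                      (Cmul Ci (Cconj (dAexpr xj yj P yixj yiyj uyi)))))
             (Cmul (Aexpr xi yi P) (Cconj (dAexpr xj yj P uxj uyj Puu))))
       (Csub (RtoC P) Ci)
  = Copp (Cmul (levi_num P Puu xi yi xj yj xixj xiyj yixj yiyj uxi uyi uxj uyj)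
               (RtoC (/(P*P+1)))).
Proof.
  assert (P * P + 1 <> 0) by nra.
  rewrite !dAexpr_components, !Aexpr_components.
  unfold levi_num, Cmul, Csub, Cadd, Copp, Cconj, RtoC, Ci; simpl.
  f_equal; field; auto.
Qed.

(* Lbar_j(A_i) = d/dzbar_j A_i + conj(A_j) d/du A_i, in jet coordinates. *)
Lemma Lbar_A_jet (P Puu xi yi xj yj xixj xiyj yixj yiyj uxi uyi uxj uyj : R) :
  Cmul (Cadd (Cmul (RtoC (/2)) (Cadd (dAexpr xi yi P xixj yixj uxj)
                                      (Cmul Ci (dAexpr xi yi P xiyj yiyj uyj))))
             (Cmul (Cconj (Aexpr xj yj P)) (dAexpr xi yi P uxi uyi Puu)))
       (Cadd (RtoC P) Ci)
  = Copp (Cmul (levi_num P Puu xi yi xj yj xixj xiyj yixj yiyj uxi uyi uxj uyj)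
               (RtoC (/(P*P+1)))).
Proof.
  assert (P * P + 1 <> 0) by nra.
  rewrite !dAexpr_components, !Aexpr_components.
  unfold levi_num, Cmul, Csub, Cadd, Copp, Cconj, RtoC, Ci; simpl.
  f_equal; field; auto.
Qed.

Lemma conjugation_identity phi p i j :
  (forall m n, has_pd n (pd m phi) p (pd n (pd m phi) p)) ->
  (forall m n, pd n (pd m phi) p = pd m (pd n phi) p) ->
  Cmul (Lf phi i (Abar phi j) p) (Csub (RtoC (pd U phi p)) Ci)
  = Cmul (Lbf phi j (Acoef phi i) p) (Cadd (RtoC (pd U phi p)) Ci).
Proof.
  intros Hsecond Hsym.
  assert (dAbar_j : forall n, has_Cpd n (Abar phi j) p
     (Cconj (dAexpr (pd (xv j) phi p) (pd (yv j) phi p) (pd U phi p)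
        (pd n (pd (xv j) phi) p) (pd n (pd (yv j) phi) p) (pd n (pd U phi) p)))).
  { intro n. apply has_Cpd_conj, has_Cpd_Acoef. intro m. apply Hsecond. }
  assert (dA_i : forall n, has_Cpd n (Acoef phi i) p
     (dAexpr (pd (xv i) phi p) (pd (yv i) phi p) (pd U phi p)
        (pd n (pd (xv i) phi) p) (pd n (pd (yv i) phi) p) (pd n (pd U phi) p))).
  { intro n. apply has_Cpd_Acoef. intro m. apply Hsecond. }
  unfold Lf, Lbf, Dz, Dzb, Du.
  rewrite !(Cpd_unique _ _ _ _ (dAbar_j _)), !(Cpd_unique _ _ _ _ (dA_i _)).
  unfold Abar. rewrite !Acoef_Aexpr, L_Abar_jet.
  rewrite (Hsym (xv i) (xv j)), (Hsym (yv i) (xv j)), (Hsym U (xv j)),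
          (Hsym (xv i) (yv j)), (Hsym (yv i) (yv j)), (Hsym U (yv j)),
          (Hsym (xv i) U), (Hsym (yv i) U).
  symmetry. apply Lbar_A_jet.
Qed.

Lemma Cdiv_cross (x y z w : C) : y <> C0 -> w <> C0 ->
  Cmul x w = Cmul z y -> Cdiv x y = Cdiv z w.
Proof.
  intros Hy Hw E. pose proof (Cnorm2_neq0 _ Hy) as Ny. pose proof (Cnorm2_neq0 _ Hw) as Nw.
  destruct x as [x1 x2], y as [y1 y2], z as [z1 z2], w as [w1 w2]; simpl in *.
  unfold Cmul in E; simpl in E. injection E; intros E2 E1.
  assert (X1 : x1 = ((z1*y1 - z2*y2)*w1 + (z1*y2 + z2*y1)*w2) / (w1*w1 + w2*w2)).
  { rewrite <- E1, <- E2. field. auto. }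
  assert (X2 : x2 = ((z1*y2 + z2*y1)*w1 - (z1*y1 - z2*y2)*w2) / (w1*w1 + w2*w2)).
  { rewrite <- E1, <- E2. field. auto. }
  subst x1 x2. unfold Cdiv, Cmul, Cinv; simpl. f_equal; field; auto.
Qed.

(* The unimodular factor rho(P) = (P + i)/(P - i) = (P + i)^2 / (P^2 + 1). *)
Definition rho (P : R) : C := ((P*P - 1) / (P*P + 1), 2*P / (P*P + 1)).

Lemma solve_rho (a b : C) (P : R) :
  Cmul a (Csub (RtoC P) Ci) = Cmul b (Cadd (RtoC P) Ci) -> a = Cmul b (rho P).
Proof.
  intros E. assert (HP : P*P + 1 <> 0) by nra.
  destruct a as [a1 a2], b as [b1 b2].
  unfold Cmul, Csub, Cadd, Copp, RtoC, Ci in E; simpl in E.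
  injection E; intros E2 E1.
  assert (X1 : a1 * (P*P + 1) = P*(b1*P - b2) - (b2*P + b1)) by nra.
  assert (X2 : a2 * (P*P + 1) = P*(b2*P + b1) + (b1*P - b2)) by nra.
  unfold rho, Cmul; simpl. f_equal; apply (Rmult_eq_reg_r (P*P + 1)); auto.
  - rewrite X1. field. auto.
  - rewrite X2. field. auto.
Qed.

Lemma quotients_agree (a b c d : C) (P : R) :
  Cmul a (Csub (RtoC P) Ci) = Cmul b (Cadd (RtoC P) Ci) ->
  Cmul c (Csub (RtoC P) Ci) = Cmul d (Cadd (RtoC P) Ci) ->
  c <> C0 -> d <> C0 -> Csub c d <> C0 ->
  Copp (Cdiv (Csub a b) (Csub c d)) = Copp (Cdiv a c) /\
  Copp (Cdiv a c) = Copp (Cdiv b d).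
Proof.
  intros Eab Ecd Hc Hd Hcd.
  rewrite (solve_rho _ _ _ Eab), (solve_rho _ _ _ Ecd) in *.
  assert (HP : P*P + 1 <> 0) by nra.
  split; f_equal; apply Cdiv_cross; auto;
    destruct b, d; unfold rho, Cmul, Csub, Cadd, Copp; simpl; f_equal; field; auto.
Qed.

Theorem mainTheorem18 (kappa : nat) (D : pt -> Prop) (phi : pt -> R) :
  (3 <= kappa)%nat ->
  open5 D ->
  Ck kappa D phi ->
  (forall p, D p -> Lf phi I1 (Abar phi I1) p <> C0) ->
  (forall p, D p -> Lbf phi I1 (Acoef phi I1) p <> C0) ->
  (forall p, D p ->
     Csub (Lf phi I1 (Abar phi I1) p) (Lbf phi I1 (Acoef phi I1) p) <> C0) ->
  forall p, D p ->
    Copp (Cdiv (Csub (Lf phi I2 (Abar phi I1) p) (Lbf phi I1 (Acoef phi I2) p))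
               (Csub (Lf phi I1 (Abar phi I1) p) (Lbf phi I1 (Acoef phi I1) p)))
    = Copp (Cdiv (Lf phi I2 (Abar phi I1) p) (Lf phi I1 (Abar phi I1) p))
    /\
    Copp (Cdiv (Lf phi I2 (Abar phi I1) p) (Lf phi I1 (Abar phi I1) p))
    = Copp (Cdiv (Lbf phi I1 (Acoef phi I2) p) (Lbf phi I1 (Acoef phi I1) p)).
Proof.
  intros Hkappa Hopen HCk HL HLb HLLb p Dp.
  assert (HC2 : Ck 2 D phi).
  { apply (Ck_le kappa); [exact (Nat.le_trans _ _ _ (Nat.le_succ_diag_r 2) Hkappa) | exact HCk]. }
  assert (Hsecond : forall m n, has_pd n (pd m phi) p (pd n (pd m phi) p))
    by (intros; now apply C2_has_second_pd with D).
  assert (Hsym : forall m n, pd n (pd m phi) p = pd m (pd n phi) p)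
    by (intros; now apply C2_pd_swap with D).
  apply quotients_agree with (P := pd U phi p); auto using conjugation_identity.
Qed.
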